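(* Let $n\ge2$, $c_1,\dots,c_{n-1}\ge0$, and for $p=1,\dots,n-1$ let $r_p\ge0$ be the largest non-negative real root of $x\mapsto Q_p(x,1)$, where $Q_p(x,y)=\frac{x^p}{p!}-\sum_{k=1}^{p}\frac{c_k}{(p-k)!}x^{p-k}y^k$. Then for each $p=1,\dots,n-2$ we have $r_p\le r_{p+1}$, with strict inequality $r_p<r_{p+1}$ whenever $r_{p+1}>0$. Equivalently, for Kähler classes $\alpha,\beta$ and factor classes $\tau_p(\alpha,\beta)=\alpha-r_p\beta$, the class $\tau_p(\alpha,\beta)-\tau_{p+1}(\alpha,\beta)$ is a non-negative multiple of $\beta$, and a strictly positive multiple whenever $\tau_{p+1}(\alpha,\beta)\ne\alpha$.
   Context: $Q_p(x,y)$ is the homogeneous degree-$p$ part of $\exp(x)(1-P(y))$ with $P(y)=\sum_{k=1}^{n-1}c_ky^k$. It factors as $(x-r_py)\tilde Q_p(x,y)$ with $\tilde Q_p$ having non-negative coefficients; $\tau_p(\alpha,\beta):=\alpha-r_p\beta$ is the factor class at dimension $p$. *)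

From HB Require Import structures.
From mathcomp Require Import all_boot all_order all_algebra.
Set Implicit Arguments. Unset Strict Implicit. Unset Printing Implicit Defensive.
Import Order.TTheory GRing.Theory Num.Theory.
Local Open Scope ring_scope.

Definition Qp1 (R : rcfType) (c : nat -> R) (p : nat) (x : R) : R :=
  x ^+ p / (p`!)%:R - \sum_(1 <= k < p.+1) c k / ((p - k)`!)%:R * x ^+ (p - k).

Definition largest_nonneg_root (R : rcfType) (f : R -> R) (r : R) : Prop :=
  [/\ 0 <= r, f r = 0 & forall x, 0 <= x -> f x = 0 -> x <= r].

From HB Require Import structures.
From mathcomp Require Import all_boot all_order all_algebra.
From mathcomp Require Import ring lra zify.
Set Implicit Arguments. Unset Strict Implicit. Unset Printing Implicit Defensive.
Import Order.TTheory GRing.Theory Num.Theory.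
Local Open Scope ring_scope.

(* Write [Q_p(x,1) = x^p/p! - S_p(x)] with [S_p = lower_part p].  Since the
   [c_k] are non-negative, [x S_p(x) <= p S_{p+1}(x)] termwise, so at a positive
   root [x] of [Q_p], [Q_{p+1}(x) <= x^(p+1)/(p+1)! - x^(p+1)/(p p!) < 0].  As
   [Q_{p+1}] is a polynomial with positive leading coefficient, it has a root
   beyond [x], hence the largest root [r_{p+1}] exceeds [r_p]. *)

Section LowerPart.

Variables (R : rcfType) (c : nat -> R).

Definition lower_part (p : nat) (x : R) : R :=
  \sum_(1 <= k < p.+1) c k / ((p - k)`!)%:R * x ^+ (p - k).

Lemma Qp1E p x : Qp1 c p x = x ^+ p / (p`!)%:R - lower_part p x.
Proof. by []. Qed.

Lemma Qp1_poly p : {P : {poly R} | forall x, P.[x] = Qp1 c p x}.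
Proof.
exists ((p`!)%:R^-1 *: 'X^p
        - \sum_(1 <= k < p.+1) (c k / ((p - k)`!)%:R) *: 'X^(p - k)) => x.
rewrite hornerD hornerN hornerZ hornerXn horner_sum /Qp1 mulrC.
by congr (_ - _); apply: eq_bigr => k _; rewrite hornerZ hornerXn.
Qed.

Lemma Qp1_ivt p a b : a <= b -> Qp1 c p a <= 0 <= Qp1 c p b ->
  exists2 x, a <= x <= b & Qp1 c p x = 0.
Proof.
move=> ab Qab; have [P PE] := Qp1_poly p.
have [x xab /eqP Px] : exists2 x, a <= x <= b & root P x.
  by apply: poly_ivt; rewrite ?PE.
by exists x; rewrite // -PE.
Qed.

Variable p : nat.
Hypothesis c_ge0 : forall k, (1 <= k <= p.+1)%N -> 0 <= c k.

Lemma lower_part_le_pow b : 1 <= b ->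
  lower_part p.+1 b <= lower_part p.+1 1 * b ^+ p.
Proof.
move=> b1; rewrite /lower_part mulr_suml; apply: ler_sum_nat => k /andP[k1 kp].
rewrite expr1n mulr1; apply: ler_wpM2l; first by rewrite divr_ge0 ?c_ge0 ?k1.
by apply: ler_weXn2l => //; lia.
Qed.

Lemma Qp1_ge0_large y : exists2 b, y <= b & 0 <= Qp1 c p.+1 b.
Proof.
set S := lower_part p.+1 1; set F : R := (p.+1`!)%:R.
have F_gt0 : 0 < F by rewrite ltr0n fact_gt0.
have S_ge0 : 0 <= S.
  rewrite /S /lower_part big_seq; apply: sumr_ge0 => k.
  by rewrite mem_index_iota => /andP[k1 kp]; rewrite expr1n mulr1 divr_ge0 ?c_ge0 ?k1.
have FS_ge0 : 0 <= F * S by rewrite mulr_ge0 // ltW.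
exists (1 + `|y| + F * S); first by have := ler_norm y; lra.
set b := 1 + `|y| + F * S.
have b1 : 1 <= b by rewrite /b; have := normr_ge0 y; lra.
rewrite Qp1E subr_ge0 (le_trans (lower_part_le_pow b1)) // exprS mulrAC.
apply: ler_wpM2r; first by rewrite exprn_ge0 // (le_trans ler01 b1).
by rewrite ler_pdivlMr // mulrC -/F -/S /b; have := normr_ge0 y; lra.
Qed.

Lemma inv_fact_sub_le k : (1 <= k <= p)%N ->
  ((p - k)`!)%:R^-1 <= p%:R / ((p.+1 - k)`!)%:R :> R.
Proof.
move=> /andP[k1 kp]; rewrite subSn // factS natrM invfM mulrA.
have f_gt0 : 0 < ((p - k)`!)%:R :> R by rewrite ltr0n fact_gt0.
rewrite -[X in X <= _]mul1r; apply: ler_wpM2r; first by rewrite invr_ge0 ltW.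
by rewrite ler_pdivlMr ?ltr0n // mul1r ler_nat; lia.
Qed.

Lemma mul_lower_part_le x : 0 <= x ->
  x * lower_part p x <= p%:R * lower_part p.+1 x.
Proof.
move=> x0; rewrite /lower_part [in X in _ <= X]big_nat_recr //= subnn expr0 mulr1.
rewrite mulrDr mulr_sumr mulr_sumr -[X in X <= _]addr0.
apply: lerD; last by rewrite mulr_ge0 ?ler0n ?divr_ge0 ?c_ge0 //= leqnn.
apply: ler_sum_nat => k /andP[k1 kp].
set z := c k * x ^+ (p.+1 - k).
have z_ge0 : 0 <= z by rewrite mulr_ge0 ?exprn_ge0 ?c_ge0 ?k1 //; lia.
have xpowS : x * x ^+ (p - k) = x ^+ (p.+1 - k) by rewrite subSn // exprS.
rewrite (_ : x * _ = z * ((p - k)`!)%:R^-1); last by rewrite /z -xpowS; ring.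
rewrite (_ : p%:R * _ = z * (p%:R / ((p.+1 - k)`!)%:R)); last by rewrite /z; ring.
by rewrite ler_wpM2l // inv_fact_sub_le ?k1.
Qed.

Lemma Qp1_succ_lt0 x : (0 < p)%N -> 0 < x -> Qp1 c p x = 0 -> Qp1 c p.+1 x < 0.
Proof.
move=> p_gt0 x_gt0 /eqP; rewrite Qp1E subr_eq0 => /eqP lowerE.
have := mul_lower_part_le (ltW x_gt0); rewrite -lowerE Qp1E.
set F : R := (p`!)%:R; set m : R := p%:R => le_lower.
have F_gt0 : 0 < F by rewrite ltr0n fact_gt0.
have m_gt0 : 0 < m by rewrite ltr0n.
have xp_gt0 : 0 < x * (x ^+ p / F) by rewrite mulr_gt0 ?divr_gt0 ?exprn_gt0.
have -> : x ^+ p.+1 / (p.+1`!)%:R = x * (x ^+ p / F) / (m + 1).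
  rewrite factS natrM -/F -natr1 -/m exprS; field.
  by rewrite -/m -/F !gt_eqF // addr_gt0.
rewrite subr_lt0; apply: (@lt_le_trans _ _ (x * (x ^+ p / F) / m)).
  by rewrite ltr_pM2l // ltf_pV2 ?posrE ?ltrDl // addr_gt0.
by rewrite ler_pdivrMr // [_ * m]mulrC.
Qed.

Lemma Qp1_root_gt x : (0 < p)%N -> 0 < x -> Qp1 c p x = 0 ->
  exists2 y, x < y & Qp1 c p.+1 y = 0.
Proof.
move=> p_gt0 x_gt0 Qx; have Qx_lt0 := Qp1_succ_lt0 p_gt0 x_gt0 Qx.
have [b xb Qb] := Qp1_ge0_large x.
have [y /andP[xy _] Qy] : exists2 y, x <= y <= b & Qp1 c p.+1 y = 0.
  by apply: Qp1_ivt xb _; rewrite Qb (ltW Qx_lt0).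
exists y => //; rewrite lt_neqAle xy andbT; apply: contraTneq Qx_lt0 => ->.
by rewrite Qy ltxx.
Qed.

End LowerPart.

Theorem lemma5p4 (R : rcfType) (n : nat) (c : nat -> R) (r : nat -> R) :
  (2 <= n)%N ->
  (forall k, (1 <= k <= n.-1)%N -> 0 <= c k) ->
  (forall p, (1 <= p <= n.-1)%N -> largest_nonneg_root (Qp1 c p) (r p)) ->
  forall p, (1 <= p <= n.-2)%N ->
    r p <= r p.+1 /\ (0 < r p.+1 -> r p < r p.+1).
Proof.
move=> n2 c_ge0 r_root p /andP[p1 pn].
have [rp_ge0 Qrp _] := r_root p ltac:(apply/andP; split; lia).
have [rq_ge0 _ rq_max] := r_root p.+1 ltac:(apply/andP; split; lia).
have [rp_le0 | rp_gt0] := leP (r p) 0.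
  by have -> : r p = 0 by apply/le_anti; rewrite rp_le0 rp_ge0.
have c_ge0' k : (1 <= k <= p.+1)%N -> 0 <= c k.
  by move=> /andP[k1 kp]; apply: c_ge0; apply/andP; split; lia.
have [y rp_lt_y Qy] := Qp1_root_gt c_ge0' p1 rp_gt0 Qrp.
have y_le : y <= r p.+1 by apply: rq_max Qy; apply: le_trans (ltW rp_lt_y).
have rp_lt := lt_le_trans rp_lt_y y_le.
by split; first exact: ltW.
Qed.
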